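(* Let $q\in L_1[0,\pi]$ with $C_0=0$ and suppose $q\in E$, i.e. $C_n=O(1/n)$ as $n\to\infty$. Then $S_j(n,q)=O(1/n)$ as $n\to\infty$ for $j=2,3,4$, where \[ S_2(n,q)=\sum_{\substack{k,l\in\mathbb{Z}\\k,\,k+l\neq0,-2n}}\frac{C_kC_lC_{-k-l}}{(2n+k)(k+l)},\quad S_3(n,q)=\sum_{\substack{k,l\in\mathbb{Z}\\k,\,k+l\neq0,-2n}}\frac{C_kC_lC_{-k-l}}{k(2n+k+l)},\quad S_4(n,q)=\sum_{\substack{k,l\in\mathbb{Z}\\k,\,k+l\neq0,-2n}}\frac{C_kC_lC_{-k-l}}{(2n+k)(2n+k+l)}. \]
   Context: $q$ is a complex-valued summable function on $[0,\pi]$; $C_k=\frac{1}{\pi}\int_0^\pi q(x)\cos kx\,dx$ for $k\in\mathbb{Z}$ (so $C_{-k}=C_k$), and it is assumed that $C_0=0$. $E$ is the set of such $q$ with $C_n=O(1/n)$. $n$ is a positive integer. *)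

From HB Require Import structures.
From mathcomp Require Import all_boot all_order all_algebra.
From mathcomp Require Import all_classical all_reals all_analysis.
From mathcomp Require Import complex.
Set Implicit Arguments. Unset Strict Implicit. Unset Printing Implicit Defensive.
Import Order.TTheory GRing.Theory Num.Theory ComplexField.
Import numFieldNormedType.Exports.
Local Open Scope classical_set_scope.
Local Open Scope ring_scope.

Definition L1_0pi (R : realType) (q : R -> R[i]) : Prop :=
  (@lebesgue_measure R).-integrable `[0, pi] (EFin \o (fun x => complex.Re (q x))) /\
  (@lebesgue_measure R).-integrable `[0, pi] (EFin \o (fun x => complex.Im (q x))).

(* C_k = (1/pi) \int_0^pi q(x) cos(kx) dx,  k \in Z *)
Definition Coef (R : realType) (q : R -> R[i]) (k : int) : R[i] :=
  ((Rintegral (@lebesgue_measure R) `[0, pi]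
      (fun x => complex.Re (q x) * cos (k%:~R * x)) / pi) +i*
   (Rintegral (@lebesgue_measure R) `[0, pi]
      (fun x => complex.Im (q x) * cos (k%:~R * x)) / pi))%C.

Definition zrange (N : nat) : seq int :=
  [seq (i%:Z - N%:Z) | i <- iota 0 (N + N).+1].

Definition Spart (R : realType) (q : R -> R[i]) (d : int -> int -> int)
    (n N : nat) : R[i] :=
  \sum_(k <- zrange N) \sum_(l <- zrange N |
      (k != 0) && (k != - (2 * n%:Z)) && (k + l != 0) && (k + l != - (2 * n%:Z)))
    (Coef q k * Coef q l * Coef q (- k - l)) / (d k l)%:~R.

Definition den2 (n : nat) (k l : int) : int := (2 * n%:Z + k) * (k + l).
Definition den3 (n : nat) (k l : int) : int := k * (2 * n%:Z + k + l).
Definition den4 (n : nat) (k l : int) : int := (2 * n%:Z + k) * (2 * n%:Z + k + l).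

(* "the double series with denominator d converges (as limit of the square
   partial sums; the series is in fact absolutely convergent) and its sum
   s_n satisfies s_n = O(1/n)". *)
Definition series_bigO_inv_n (R : realType) (q : R -> R[i])
    (d : nat -> int -> int -> int) : Prop :=
  exists (M : R) (n0 : nat), forall n : nat, (n0 <= n)%N -> (0 < n)%N ->
    exists s : R[i],
      (fun N => complex.Re (Spart q (d n) n N)) @ \oo --> complex.Re s /\
      (fun N => complex.Im (Spart q (d n) n N)) @ \oo --> complex.Im s /\
      `|s| <= ((M / n%:R)%:C)%C.

(* Evenness of [k |-> C_k] and [C_0 = 0] turn [C_n = O(1/n)] into [|C_k| <= A / |k|]
   for all [k], with [1/0 := 0].  In each of the three denominators, two of the
   factors [|k|], [|k + l|], [|2n + k|], [|2n + k + l|] (counting [|k + l|] from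
   [C_{-k-l}]) differ by exactly [2n], and [|u| + |u + 2n| >= 2n] gives
   [1 / (|u| |u + 2n|) <= (1/|u| + 1/|u + 2n|) / 2n].  After this and AM-GM every term
   is at most [A^3 / 4n] times four products [1 / (a^2 b^2)], where [(k, l) |-> (a, b)]
   is a shear of [Z^2]; these are summable over [Z^2] with sum [<= 16] for every [n]. *)

From HB Require Import structures.
From mathcomp Require Import all_boot all_order all_algebra.
From mathcomp Require Import all_classical all_reals all_analysis.
From mathcomp Require Import complex.
From mathcomp Require Import lra zify ring.
Set Implicit Arguments. Unset Strict Implicit. Unset Printing Implicit Defensive.
Import Order.TTheory GRing.Theory Num.Theory ComplexField Normc.
Import numFieldNormedType.Exports.
Local Open Scope classical_set_scope.
Local Open Scope ring_scope.

Lemma zrangeS N : zrange N.+1 = - N.+1%:Z :: rcons (zrange N) N.+1%:Z.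
Proof.
rewrite /zrange.
have -> : (N.+1 + N.+1).+1 = ((N + N).+1 + 1).+1 by rewrite addn1 addSn addnS.
have -> : iota 0 ((N + N).+1 + 1).+1 = 0 :: iota (1 + 0) ((N + N).+1 + 1) by [].
rewrite map_cons iotaD map_cat -cats1; congr (_ :: _ ++ _); first by lia.
  by rewrite iotaDl -map_comp; apply: eq_map => i /=; rewrite PoszD; lia.
by rewrite /= !PoszD; congr [:: _]; lia.
Qed.

Definition square_sum (V : nmodType) (G : int -> int -> V) (P : int -> int -> bool)
    (N : nat) : V :=
  \sum_(k <- zrange N) \sum_(l <- zrange N | P k l) G k l.

Lemma square_sumD (V : nmodType) (G H : int -> int -> V) P N :
  square_sum (fun k l => G k l + H k l) P N = square_sum G P N + square_sum H P N.
Proof. by rewrite /square_sum -big_split; apply: eq_bigr => k _; rewrite big_split. Qed.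

Section OrderedSquareSums.
Variable R : realDomainType.
Implicit Types (G H : int -> int -> R) (P : int -> int -> bool).

Lemma ler_square_sum G H P N :
  (forall k l, P k l -> G k l <= H k l) -> square_sum G P N <= square_sum H P N.
Proof. by move=> GH; apply: ler_sum => k _; apply: ler_sum => l /GH. Qed.

Lemma square_sum_ge0 G P N : (forall k l, P k l -> 0 <= G k l) -> 0 <= square_sum G P N.
Proof. by move=> G0; apply: sumr_ge0 => k _; apply: sumr_ge0 => l /G0. Qed.

Lemma ler_sum_zrangeS (F : int -> R) (Q : pred int) N :
  (forall l, Q l -> 0 <= F l) ->
  \sum_(l <- zrange N | Q l) F l <= \sum_(l <- zrange N.+1 | Q l) F l.
Proof.
move=> F0; rewrite !(big_mkcond Q) zrangeS.
move: (zrange N) => s; rewrite big_cons -cats1 big_cat big_seq1 /=.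
have F0' l : 0 <= (if Q l then F l else 0) by case: ifP => // /F0.
by have := F0' (- N.+1%:Z); have := F0' N.+1%:Z; lra.
Qed.

Lemma square_sum_nondecreasing G P :
  (forall k l, P k l -> 0 <= G k l) -> nondecreasing_seq (square_sum G P).
Proof.
move=> G0; apply/nondecreasing_seqP => N; rewrite /square_sum.
apply: (@le_trans _ _ (\sum_(k <- zrange N) \sum_(l <- zrange N.+1 | P k l) G k l)).
  by apply: ler_sum => k _; apply: ler_sum_zrangeS => l /G0.
apply: (@ler_sum_zrangeS _ xpredT) => k _.
by apply: sumr_ge0 => l /G0.
Qed.

End OrderedSquareSums.

Section RealSquareSums.
Variable R : realType.
Implicit Types (G H : int -> int -> R) (P : int -> int -> bool).

Lemma square_sum_cvg G P B :
  (forall k l, P k l -> 0 <= G k l) -> (forall N, square_sum G P N <= B) ->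
  exists2 s, square_sum G P @ \oo --> s & 0 <= s <= B.
Proof.
move=> G0 GB; set s := sup (range (square_sum G P)).
have cvg_s : square_sum G P @ \oo --> s.
  apply: nondecreasing_cvgn; first exact: square_sum_nondecreasing.
  by exists B => _ [N _ <-].
exists s => //; apply/andP; split.
  by apply: (cvgr_to_ge cvg_s); near=> N; apply: square_sum_ge0.
by apply: (cvgr_to_le cvg_s); near=> N; apply: GB.
Unshelve. all: by end_near.
Qed.

(* [G] is the difference of the nonnegative families [G + H] and [H]. *)
Lemma square_sum_cvg_dominated G H P B :
  (forall k l, `|G k l| <= H k l) -> (forall N, square_sum H P N <= B) ->
  exists2 s, square_sum G P @ \oo --> s & `|s| <= 2 * B.
Proof.
move=> GH HB.
have H0 k l : P k l -> 0 <= H k l by move=> _; exact: le_trans (normr_ge0 _) (GH k l).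
have GH0 k l : P k l -> 0 <= G k l + H k l.
  by move=> _; have := GH k l; rewrite ler_norml; lra.
have GHB N : square_sum (fun k l => G k l + H k l) P N <= 2 * B.
  rewrite square_sumD; have := HB N.
  have : square_sum G P N <= square_sum H P N.
    by apply: ler_square_sum => k l _; exact: le_trans (ler_norm _) (GH k l).
  lra.
have [u cvg_u /andP[u0 uB]] := square_sum_cvg GH0 GHB.
have [v cvg_v /andP[v0 vB]] := square_sum_cvg H0 HB.
exists (u - v); last by rewrite ler_norml; lra.
have -> : square_sum G P =
    (fun N => square_sum (fun k l => G k l + H k l) P N - square_sum H P N).
  by apply/funext => N; rewrite square_sumD addrK.
exact: cvgB.
Qed.

End RealSquareSums.

Section ComplexModulus.
Variable R : rcfType.
Local Open Scope complex_scope.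

Lemma normr_normc (z : R[i]) : `|z| = (normc z)%:C.
Proof. by case: z. Qed.

Lemma normc_ge0 (z : R[i]) : 0 <= normc z.
Proof. by case: z => a b; exact: sqrtr_ge0. Qed.

Lemma Re_le_normc (z : R[i]) : `|complex.Re z| <= normc z.
Proof.
case: z => a b /=; rewrite -sqrtr_sqr ler_sqrt ?addr_ge0 ?sqr_ge0 //.
by rewrite lerDl sqr_ge0.
Qed.

Lemma Im_le_normc (z : R[i]) : `|complex.Im z| <= normc z.
Proof.
case: z => a b /=; rewrite -sqrtr_sqr ler_sqrt ?addr_ge0 ?sqr_ge0 //.
by rewrite lerDr sqr_ge0.
Qed.

Lemma normc_le_Re_Im (z : R[i]) : normc z <= `|complex.Re z| + `|complex.Im z|.
Proof.
case: z => a b /=; have ab0 : 0 <= `|a| + `|b| by rewrite addr_ge0.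
have -> : `|a| + `|b| = Num.sqrt ((`|a| + `|b|) ^+ 2) by rewrite sqrtr_sqr (ger0_norm ab0).
rewrite ler_sqrt ?sqr_ge0 //.
rewrite sqrrD -[a ^+ 2]real_normK ?num_real // -[b ^+ 2]real_normK ?num_real //.
by rewrite -addrA lerD2l lerDr mulrn_wge0 // mulr_ge0.
Qed.

Lemma Re_square_sum (t : int -> int -> R[i]) P N :
  complex.Re (square_sum t P N) = square_sum (fun k l => complex.Re (t k l)) P N.
Proof.
rewrite /square_sum raddf_sum; apply: eq_bigr => k _; exact: raddf_sum.
Qed.

Lemma Im_square_sum (t : int -> int -> R[i]) P N :
  complex.Im (square_sum t P N) = square_sum (fun k l => complex.Im (t k l)) P N.
Proof.
rewrite /square_sum raddf_sum; apply: eq_bigr => k _; exact: raddf_sum.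
Qed.

Lemma normc_int (d : int) : normc (d%:~R : R[i]) = `|d%:~R|.
Proof. by rewrite -(rmorph_int (real_complex R)) /= expr0n addr0 sqrtr_sqr. Qed.

End ComplexModulus.

Lemma square_sum_complex_cvg (R : realType) (t : int -> int -> R[i]) P B :
  (forall N, square_sum (fun k l => normc (t k l)) P N <= B) ->
  exists s : R[i],
    (fun N => complex.Re (square_sum t P N)) @ \oo --> complex.Re s /\
    (fun N => complex.Im (square_sum t P N)) @ \oo --> complex.Im s /\ `|s| <= (4 * B)%:C%C.
Proof.
move=> tB.
have [x cvg_x xB] := square_sum_cvg_dominated (fun k l => Re_le_normc (t k l)) tB.
have [y cvg_y yB] := square_sum_cvg_dominated (fun k l => Im_le_normc (t k l)) tB.
exists (x +i* y)%C; split; [|split].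
- by under eq_fun do rewrite Re_square_sum.
- by under eq_fun do rewrite Im_square_sum.
- rewrite normr_normc lecR; apply: le_trans (normc_le_Re_Im _) _ => /=; lra.
Qed.

Section InverseSquares.
Variable R : realFieldType.

Definition inv_abs (x : int) : R := `|x%:~R|^-1.

Lemma inv_abs_ge0 x : 0 <= inv_abs x.
Proof. by rewrite invr_ge0. Qed.

Lemma inv_abs0 : inv_abs 0 = 0.
Proof. by rewrite /inv_abs normr0 invr0. Qed.

Lemma inv_absN x : inv_abs (- x) = inv_abs x.
Proof. by rewrite /inv_abs mulrNz normrN. Qed.

Lemma inv_absM x y : inv_abs (x * y) = inv_abs x * inv_abs y.
Proof. by rewrite /inv_abs intrM normrM invfM. Qed.

Lemma inv_abs_nat (m : nat) : inv_abs m%:Z = m%:R^-1.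
Proof. by rewrite /inv_abs pmulrn normr_nat. Qed.

Lemma inv_abs_sqr x : inv_abs x ^+ 2 = (x%:~R ^+ 2)^-1.
Proof. by rewrite exprVn real_normK ?num_real. Qed.

(* Because [|w - u| <= |u| + |w|]. *)
Lemma inv_abs_pair_le u w : u != w ->
  inv_abs u * inv_abs w <= (inv_abs u + inv_abs w) * inv_abs (w - u).
Proof.
move=> uw; have [->|u0] := eqVneq u 0.
  by rewrite inv_abs0 mul0r mulr_ge0 ?addr_ge0 ?inv_abs_ge0.
have [->|w0] := eqVneq w 0.
  by rewrite inv_abs0 mulr0 mulr_ge0 ?addr_ge0 ?inv_abs_ge0.
rewrite /inv_abs intrB.
have p0 : 0 < `|u%:~R : R| by rewrite normr_gt0 intr_eq0.
have r0 : 0 < `|w%:~R : R| by rewrite normr_gt0 intr_eq0.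
have m0 : 0 < `|w%:~R - u%:~R : R| by rewrite normr_gt0 subr_eq0 eqr_int eq_sym.
have mpr : `|w%:~R - u%:~R : R| <= `|u%:~R| + `|w%:~R|.
  by rewrite [X in _ <= X]addrC; exact: ler_normB.
move: p0 r0 m0 mpr; set p := `|u%:~R : R|; set r := `|w%:~R : R|; set m := `|_ - _|.
move=> p0 r0 m0 mpr.
have -> : (p^-1 + r^-1) * m^-1 = (p + r) / m * (p^-1 * r^-1) by field; rewrite !gt_eqF.
rewrite -[X in X <= _]mul1r; apply: ler_wpM2r; first by rewrite mulr_ge0 ?invr_ge0 ?ltW.
by rewrite ler_pdivlMr // mul1r.
Qed.

Lemma inv_sqr_le_telescope (y : R) : 1 <= y -> (y ^+ 2)^-1 <= 2 / y - 2 / (y + 1).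
Proof.
move=> y1; have y0 : y != 0 by apply/eqP; lra.
have y10 : y + 1 != 0 by apply/eqP; lra.
rewrite -subr_ge0.
have -> : 2 / y - 2 / (y + 1) - (y ^+ 2)^-1 = (y - 1) / (y ^+ 2 * (y + 1)).
  by field; rewrite y0 y10.
by rewrite divr_ge0 ?mulr_ge0 ?sqr_ge0 //; lra.
Qed.

(* A bounded discrete primitive majorising [x |-> 1 / x^2]. *)
Definition inv_sqr_primitive (x : int) : R :=
  if 0 < x then 4 - 2 / x%:~R else 2 / (1 - x%:~R).

Lemma inv_abs_sqr_le_primitiveD x :
  inv_abs x ^+ 2 <= inv_sqr_primitive (x + 1) - inv_sqr_primitive x.
Proof.
rewrite inv_abs_sqr /inv_sqr_primitive; case: (ltrgt0P x) => [x0|x0|->].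
- rewrite (_ : 0 < x + 1) ?intrD; last by lia.
  have x1 : 1 <= x%:~R :> R by rewrite ler1z.
  by have := inv_sqr_le_telescope x1; lra.
- rewrite (_ : 0 < x + 1 = false) ?ltNge ?negbK ?intrD; try by lia.
  have x1 : 1 <= (- x)%:~R :> R by rewrite ler1z; lia.
  have := inv_sqr_le_telescope x1; rewrite intrN sqrrN.
  have -> : 1 - (x%:~R + 1%:~R) = - x%:~R :> R by ring.
  by rewrite [1 - _]addrC.
- by rewrite add0r ltr01 expr0n /= invr0 !subr0 divr1; lra.
Qed.

Lemma inv_sqr_primitive_bounds x : 0 <= inv_sqr_primitive x <= 4.
Proof.
rewrite /inv_sqr_primitive; case: ifP => [x0|/negbT x0].
  have x1 : 1 <= x%:~R :> R by rewrite ler1z.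
  have : 0 <= 2 / (x%:~R : R) <= 2 by rewrite divr_ge0 ?ler_pdivrMr /=; lra.
  lra.
have x1 : 1 <= 1 - x%:~R :> R by rewrite lerDl oppr_ge0 lerz0 leNgt.
by rewrite divr_ge0 ?ler_pdivrMr /=; lra.
Qed.

Lemma sum_sqr_inv_abs_le c N : \sum_(k <- zrange N) inv_abs (k + c) ^+ 2 <= 4.
Proof.
rewrite /zrange big_map (_ : iota 0 _ = index_iota 0 (N + N).+1); last by rewrite /index_iota subn0.
set f := fun i : nat => inv_sqr_primitive (i%:Z - N%:Z + c).
apply: (@le_trans _ _ (\sum_(0 <= i < (N + N).+1) (f i.+1 - f i))).
  apply: ler_sum => i _; rewrite /f (_ : i.+1%:Z - N%:Z + c = i%:Z - N%:Z + c + 1); last by lia.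
  exact: inv_abs_sqr_le_primitiveD.
rewrite telescope_sumr // /f.
have /andP[? ?] := inv_sqr_primitive_bounds ((N + N).+1%:Z - N%:Z + c).
by have /andP[? ?] := inv_sqr_primitive_bounds (0%:Z - N%:Z + c); lra.
Qed.

Lemma square_sum_sqr_inv_abs_le (a : int -> int) (b : int -> int -> int) N :
  (forall k, a k = k + a 0) -> (forall k l, b k l = l + b k 0) ->
  square_sum (fun k l => (inv_abs (a k) * inv_abs (b k l)) ^+ 2) (fun _ _ => true) N
    <= 16.
Proof.
move=> ha hb; rewrite /square_sum.
apply: (@le_trans _ _ (\sum_(k <- zrange N) inv_abs (a k) ^+ 2 * 4)).
  apply: ler_sum => k _; under eq_bigr do rewrite exprMn; rewrite -mulr_sumr.
  rewrite ler_wpM2l ?sqr_ge0 //; under eq_bigr do rewrite hb.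
  exact: sum_sqr_inv_abs_le.
rewrite -mulr_suml; under eq_bigr do rewrite ha.
by have := sum_sqr_inv_abs_le (a 0) N; lra.
Qed.

Lemma square_sum_sqr_inv_abs_le_swap (a : int -> int) (b : int -> int -> int) N :
  (forall l, a l = l + a 0) -> (forall k l, b k l = k + b 0 l) ->
  square_sum (fun k l => (inv_abs (a l) * inv_abs (b k l)) ^+ 2) (fun _ _ => true) N
    <= 16.
Proof.
move=> ha hb; rewrite /square_sum exchange_big /=.
exact: (@square_sum_sqr_inv_abs_le a (fun l k => b k l)).
Qed.

Lemma mul_le_pair_amgm (u w x rest a1 b1 a2 b2 : R) :
  0 <= x -> 0 <= rest -> u * w <= (u + w) * x ->
  u * rest = a1 * b1 -> w * rest = a2 * b2 ->
  u * w * rest <= x / 2 * (a1 ^+ 2 + b1 ^+ 2 + a2 ^+ 2 + b2 ^+ 2).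
Proof.
move=> x0 r0 uwx e1 e2; apply: le_trans (ler_wpM2r r0 uwx) _.
have -> : (u + w) * x * rest = x * (a1 * b1 + a2 * b2) by rewrite -e1 -e2; ring.
have := mulr_ge0 x0 (sqr_ge0 (a1 - b1)); have := mulr_ge0 x0 (sqr_ge0 (a2 - b2)).
nra.
Qed.

End InverseSquares.

Section Coefficients.
Variable R : realType.
Implicit Types (q : R -> R[i]) (A : R).

Lemma CoefN q x : Coef q (- x) = Coef q x.
Proof.
by rewrite /Coef; congr ((_ / _) +i* (_ / _))%C; congr Rintegral; apply/funext => y;
  rewrite mulrNz mulNr cosN.
Qed.

(* [C_0 = 0] makes the bound hold at [k = 0], where [inv_abs 0 = 0]. *)
Lemma Coef_le_inv_abs q (M : R) (n0 : nat) :
  Coef q 0 = 0 ->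
  (forall n : nat, (n0 <= n)%N -> (0 < n)%N -> `|Coef q n%:Z| <= ((M / n%:R)%:C)%C) ->
  exists2 A, 0 <= A & forall x, normc (Coef q x) <= A * inv_abs R x.
Proof.
move=> C0 CM; set S := \sum_(i < n0) i%:R * normc (Coef q i%:Z).
have S0 : 0 <= S by apply: sumr_ge0 => i _; rewrite mulr_ge0 ?ler0n ?normc_ge0.
exists (`|M| + S); first by rewrite addr_ge0.
have Cnat (m : nat) : (0 < m)%N -> normc (Coef q m%:Z) <= (`|M| + S) * inv_abs R m%:Z.
  move=> m0; have m0' : 0 < m%:R :> R by rewrite ltr0n.
  rewrite inv_abs_nat; case: (leqP n0 m) => [n0m|mn0].
    apply: (@le_trans _ _ (M / m%:R)); first by rewrite -lecR -normr_normc CM.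
    by rewrite ler_pM2r ?invr_gt0 //; have := ler_norm M; lra.
  rewrite ler_pdivlMr // mulrC; apply: (@le_trans _ _ S); last first.
    by have := normr_ge0 M; lra.
  rewrite /S (bigD1 (Ordinal mn0)) //= lerDl.
  by apply: sumr_ge0 => i _; rewrite mulr_ge0 ?ler0n ?normc_ge0.
move=> x; case: (ltrgt0P x) => [x0|x0|->].
- by rewrite -(gez0_abs (ltW x0)); apply: Cnat; rewrite absz_gt0 gt_eqF.
- by rewrite -CoefN -inv_absN -(ltz0_abs x0); apply: Cnat; rewrite absz_gt0 lt_eqF.
- by rewrite C0 inv_abs0 mulr0 -lecR -normr_normc normr0.
Qed.

Definition Sterm q (d k l : int) : R[i] :=
  Coef q k * Coef q l * Coef q (- k - l) / d%:~R.

Lemma normc_Sterm_le q A d k l :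
  (forall x, normc (Coef q x) <= A * inv_abs R x) ->
  normc (Sterm q d k l) <=
    A ^+ 3 * (inv_abs R k * inv_abs R l * inv_abs R (k + l) * inv_abs R d).
Proof.
move=> CA; rewrite /Sterm !normcM normcV normc_int.
have C3 : normc (Coef q (- k - l)) <= A * inv_abs R (k + l) by rewrite -opprD CoefN.
rewrite [X in _ <= X](_ : _ = A * inv_abs R k * (A * inv_abs R l) * (A * inv_abs R (k + l))
  * inv_abs R d); last by ring.
by rewrite ler_wpM2r ?inv_abs_ge0 // !ler_pM ?mulr_ge0 ?normc_ge0.
Qed.

(* [u] and [m + u] are two factors of the denominator (or [u = k + l], the index of
   the third coefficient), and [rest] collects the remaining factors. *)
Lemma normc_Sterm_le_pair q A d k l (m u : int) (rest a1 b1 a2 b2 : R) :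
  0 <= A -> (forall x, normc (Coef q x) <= A * inv_abs R x) -> m != 0 -> 0 <= rest ->
  inv_abs R k * inv_abs R l * inv_abs R (k + l) * inv_abs R d =
    inv_abs R u * inv_abs R (m + u) * rest ->
  inv_abs R u * rest = a1 * b1 -> inv_abs R (m + u) * rest = a2 * b2 ->
  normc (Sterm q d k l) <=
    A ^+ 3 / 2 * inv_abs R m * (a1 ^+ 2 + b1 ^+ 2 + a2 ^+ 2 + b2 ^+ 2).
Proof.
move=> A0 CA m0 r0 ed e1 e2; apply: le_trans (normc_Sterm_le _ _ _ CA) _.
have um : u != m + u by lia.
have := inv_abs_pair_le R um; rewrite addrK => uw.
rewrite ed [X in _ <= X](_ : _ = A ^+ 3 *
  (inv_abs R m / 2 * (a1 ^+ 2 + b1 ^+ 2 + a2 ^+ 2 + b2 ^+ 2))); last by ring.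
apply: ler_wpM2l; first exact: exprn_ge0.
exact: mul_le_pair_amgm (inv_abs_ge0 _ _) r0 uw e1 e2.
Qed.

Lemma series_bigO_inv_n_of_le q (d : nat -> int -> int -> int) (K B : R)
    (g : nat -> int -> int -> R) :
  0 <= K -> (forall n N, square_sum (g n) (fun _ _ => true) N <= B) ->
  (forall n k l, (0 < n)%N ->
     normc (Sterm q (d n k l) k l) <= K * inv_abs R (2 * n%:Z) * g n k l) ->
  series_bigO_inv_n q d.
Proof.
move=> K0 gB tg; exists (2 * K * B), 0%N => n _ n_gt0.
have KV0 : 0 <= K * inv_abs R (2 * n%:Z) by rewrite mulr_ge0 ?inv_abs_ge0.
set P := fun k l : int =>
  (k != 0) && (k != - (2 * n%:Z)) && (k + l != 0) && (k + l != - (2 * n%:Z)).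
have tB N : square_sum (fun k l => normc (Sterm q (d n k l) k l)) P N
    <= K * inv_abs R (2 * n%:Z) * B.
  apply: (@le_trans _ _ (K * inv_abs R (2 * n%:Z) * square_sum (g n) (fun _ _ => true) N)).
    rewrite /square_sum mulr_sumr; apply: ler_sum => k _.
    rewrite mulr_sumr big_mkcond; apply: ler_sum => l _.
    by case: ifP => _; [|apply: le_trans (normc_ge0 _) _]; exact: tg.
  exact: ler_wpM2l (gB n N).
have [s [cvg_re [cvg_im sB]]] := square_sum_complex_cvg tB.
exists s; split; [exact: cvg_re | split; [exact: cvg_im |]].
apply: le_trans sB _; rewrite lecR (_ : 2 * n%:Z = (2 * n)%N%:Z) // inv_abs_nat.
have n0 : n%:R != 0 :> R by rewrite pnatr_eq0 -lt0n.
by rewrite natrM le_eqVlt; apply/orP; left; apply/eqP; field.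
Qed.

Section Denominators.
Variables (q : R -> R[i]) (A : R).
Hypotheses (A0 : 0 <= A) (CA : forall x, normc (Coef q x) <= A * inv_abs R x).
Local Notation V := (inv_abs R).

Lemma series_bigO_inv_n_den2 : series_bigO_inv_n q den2.
Proof.
apply: (@series_bigO_inv_n_of_le q den2 (A ^+ 3 / 2) (16 + 16 + 16 + 16)
  (fun n k l => (V k * V (k + l)) ^+ 2 + (V l * V (k + l)) ^+ 2
              + (V (2 * n%:Z + k) * V (k + l)) ^+ 2 + (V l * V (k + l)) ^+ 2)).
- by rewrite divr_ge0 ?exprn_ge0.
- move=> n N; rewrite !square_sumD; do ![apply: lerD].
  + by apply: square_sum_sqr_inv_abs_le => *; lia.
  + by apply: square_sum_sqr_inv_abs_le_swap => *; lia.
  + by apply: square_sum_sqr_inv_abs_le => *; lia.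
  + by apply: square_sum_sqr_inv_abs_le_swap => *; lia.
- move=> n k l n0; apply: (normc_Sterm_le_pair (u := k) (rest := V l * V (k + l) ^+ 2)) => //.
  + by lia.
  + by rewrite mulr_ge0 ?exprn_ge0 ?inv_abs_ge0.
  + by rewrite /den2 inv_absM; ring.
  + by ring.
  + by ring.
Qed.

Lemma series_bigO_inv_n_den3 : series_bigO_inv_n q den3.
Proof.
apply: (@series_bigO_inv_n_of_le q den3 (A ^+ 3 / 2) (16 + 16 + 16 + 16)
  (fun n k l => (V k * V l) ^+ 2 + (V k * V (k + l)) ^+ 2
              + (V k * V l) ^+ 2 + (V k * V (2 * n%:Z + (k + l))) ^+ 2)).
- by rewrite divr_ge0 ?exprn_ge0.
- move=> n N; rewrite !square_sumD; do ![apply: lerD];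
    by apply: square_sum_sqr_inv_abs_le => *; lia.
- move=> n k l n0.
  apply: (normc_Sterm_le_pair (u := k + l) (rest := V k ^+ 2 * V l)) => //.
  + by lia.
  + by rewrite mulr_ge0 ?exprn_ge0 ?inv_abs_ge0.
  + by rewrite /den3 inv_absM addrA; ring.
  + by ring.
  + by ring.
Qed.

Lemma series_bigO_inv_n_den4 : series_bigO_inv_n q den4.
Proof.
apply: (@series_bigO_inv_n_of_le q den4 (A ^+ 3 / 2) (16 + 16 + 16 + 16)
  (fun n k l => (V k * V (k + l)) ^+ 2 + (V l * V (2 * n%:Z + k + l)) ^+ 2
              + (V (2 * n%:Z + k) * V (k + l)) ^+ 2 + (V l * V (2 * n%:Z + k + l)) ^+ 2)).
- by rewrite divr_ge0 ?exprn_ge0.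
- move=> n N; rewrite !square_sumD; do ![apply: lerD].
  + by apply: square_sum_sqr_inv_abs_le => *; lia.
  + by apply: square_sum_sqr_inv_abs_le_swap => *; lia.
  + by apply: square_sum_sqr_inv_abs_le => *; lia.
  + by apply: square_sum_sqr_inv_abs_le_swap => *; lia.
- move=> n k l n0.
  apply: (normc_Sterm_le_pair (u := k) (rest := V l * V (k + l) * V (2 * n%:Z + k + l))) => //.
  + by lia.
  + by rewrite !mulr_ge0 ?inv_abs_ge0.
  + by rewrite /den4 inv_absM; ring.
  + by ring.
  + by ring.
Qed.

End Denominators.
End Coefficients.

Theorem lemma3 (R : realType) (q : R -> R[i]) :
  L1_0pi q ->
  Coef q 0 = 0 ->
  (exists (M : R) (n0 : nat), forall n : nat, (n0 <= n)%N -> (0 < n)%N ->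
      `|Coef q n%:Z| <= ((M / n%:R)%:C)%C) ->
  series_bigO_inv_n q den2 /\ series_bigO_inv_n q den3 /\ series_bigO_inv_n q den4.
Proof.
move=> _ C0 [M [n0 CM]]; have [A A0 CA] := Coef_le_inv_abs C0 CM.
split; [|split].
- exact: series_bigO_inv_n_den2 A0 CA.
- exact: series_bigO_inv_n_den3 A0 CA.
- exact: series_bigO_inv_n_den4 A0 CA.
Qed.
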